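(* Let $n\ge 2$ and let $P=(P_1,\dots,P_t)$ be a partition of $\{1,\dots,n+1\}$; put $n_i=|P_i|$ and, for $u\ge 1$, let $m_u$ be the number of parts of size $u$. Then $$|Aut({\cal K}(P))|=\Big(\prod_{i=1}^t (n_i+1)!\Big)\prod_{u\ge 1} m_u!\,.$$
   Context: For a partition $P=(P_1,\dots,P_t)$ of $\{1,\dots,n+1\}$, ${\cal K}(P)$ is the simplicial complex on the vertex set $\{1,\dots,n+1\}\cup\{p_1,\dots,p_t\}$ ($t$ new vertices) whose $n$-faces are the sets $\{y_1,\dots,y_{n+1}\}$ with, for each $i$, $y_i=i$ or $y_i=p_j$ where $i\in P_j$, subject to the $y_i$ being pairwise distinct; its faces are all nonempty subsets of these. $Aut({\cal K})$ is the group of permutations of the vertices of ${\cal K}$ mapping the set of faces onto itself. *)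

From mathcomp Require Import all_boot all_fingroup.
Set Implicit Arguments. Unset Strict Implicit. Unset Printing Implicit Defensive.

(* The complex K(P) for n+1 original vertices ('I_n.+1, i.e. {1..n+1} shifted
   to {0..n}) and a partition into t parts given by a surjective labelling
   f : 'I_n.+1 -> 'I_t (part P_j = f^-1(j)).  Vertices: inl i = original
   vertex i, inr j = new vertex p_j. *)
Definition vert (n t : nat) := ('I_n.+1 + 'I_t)%type.

Definition ychoice n t (f : 'I_n.+1 -> 'I_t) (c : {ffun 'I_n.+1 -> bool})
  (i : 'I_n.+1) : vert n t :=
  if c i then inr (f i) else inl i.

Definition yset n t (f : 'I_n.+1 -> 'I_t) (c : {ffun 'I_n.+1 -> bool})
  : {set vert n t} := [set ychoice f c i | i : 'I_n.+1].

Definition is_facet n t (f : 'I_n.+1 -> 'I_t) (A : {set vert n t}) : bool :=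
  [exists c : {ffun 'I_n.+1 -> bool},
     injectiveb (ychoice f c) && (A == yset f c)].

Definition is_face n t (f : 'I_n.+1 -> 'I_t) (A : {set vert n t}) : bool :=
  (A != set0) && [exists B : {set vert n t}, is_facet f B && (A \subset B)].

Definition is_aut n t (f : 'I_n.+1 -> 'I_t) (s : {perm vert n t}) : bool :=
  [forall A : {set vert n t}, is_face f (s @: A) == is_face f A].

Definition AutK n t (f : 'I_n.+1 -> 'I_t) : {set {perm vert n t}} :=
  [set s | is_aut f s].

Definition part_size n t (f : 'I_n.+1 -> 'I_t) (j : 'I_t) : nat :=
  #|[set i | f i == j]|.

Definition mult n t (f : 'I_n.+1 -> 'I_t) (u : nat) : nat :=
  #|[set j | part_size f j == u]|.

(* Call B_j = P_j ∪ {p_j} the blocks of K(P).  Every facet misses a vertex of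
   each block, and the complement of a transversal of the blocks is a facet,
   so a nonempty set of vertices is a face exactly when it contains no whole
   block; hence the automorphisms are the permutations sending blocks onto
   blocks.  Such a permutation induces a permutation of the block indices
   preserving the block sizes n_j + 1.  The kernel of this homomorphism is the
   product of the symmetric groups of the blocks, of order prod (n_j + 1)!, and
   its image is the group of size-preserving permutations of {1..t}, of order
   prod m_u!. *)

From mathcomp Require Import all_boot all_fingroup.
Set Implicit Arguments. Unset Strict Implicit. Unset Printing Implicit Defensive.

Lemma card_group_ker_morphim (aT rT : finGroupType) (D G : {group aT})
    (f : {morphism D >-> rT}) :
  G \subset D -> #|G| = (#|G :&: ('ker f)%g| * #|(f @* G)%g|)%N.
Proof. by move=> sGD; rewrite card_morphim (setIidPr sGD) LagrangeI. Qed.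

Lemma imset_permKV (T : finType) (s : {perm T}) (A : {set T}) :
  s @: ((s^-1)%g @: A) = A.
Proof. by rewrite -imset_comp (eq_imset _ (permKV s)) imset_id. Qed.

Section PermSupport.

Variable T : finType.
Implicit Types (A S : {set T}) (G : {group {perm T}}).

Lemma Sym_astab A S : Sym A :&: 'C(S | 'P)%g = Sym (A :\: S).
Proof.
apply/setP => s; rewrite in_setI ![s \in Sym _]inE.
apply/andP/idP => [[sA /astabP fixS] | sAS].
  apply/subsetP => x sx; rewrite inE (subsetP sA) // andbT.
  by apply: contra sx => /fixS/eqP.
split; first by apply: subset_trans sAS (subsetDl _ _).
by apply/astabP => x xS; apply: (out_perm sAS); rewrite inE xS.
Qed.

Lemma restr_perm_Sym S G :
  Sym S \subset G -> G \subset 'N(S | 'P)%g -> (restr_perm S @* G)%g = Sym S.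
Proof.
move=> sSG sGN; apply/eqP; rewrite eqEsubset; apply/andP; split.
  by apply/subsetP => _ /morphimP[s _ _ ->]; rewrite inE restr_perm_on.
apply/subsetP => a aS; have aG := subsetP sSG a aS; rewrite inE in aS.
apply/morphimP; exists a; rewrite ?(subsetP sGN) //; apply/permP => x.
have [xS | xNS] := boolP (x \in S); first by rewrite restr_permE ?(subsetP sGN).
by rewrite !(out_perm _ xNS) // restr_perm_on.
Qed.

End PermSupport.

Section Fibers.

Variables (X Y : finType) (b : X -> Y).
Implicit Types (A : {set X}) (s : {perm X}).

Definition fiber y : {set X} := [set x | b x == y].

Definition fiber_preserving : {set {perm X}} :=
  [set s : {perm X} | [forall x, b (s x) == b x]].

Lemma fiber_preservingP s :
  reflect (forall x, b (s x) = b x) (s \in fiber_preserving).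
Proof. by rewrite inE; apply: (iffP forallP) => sb x; apply/eqP. Qed.

Lemma fiber_preserving_group_set : group_set fiber_preserving.
Proof.
apply/group_setP; split=> [|s u /fiber_preservingP sb /fiber_preservingP ub].
  by apply/fiber_preservingP => x; rewrite perm1.
by apply/fiber_preservingP => x; rewrite permM ub sb.
Qed.

Canonical fiber_preserving_group := Group fiber_preserving_group_set.

Lemma Sym_fiber_sub y : Sym (fiber y) \subset fiber_preserving.
Proof.
apply/subsetP => a; rewrite inE => a_on; apply/fiber_preservingP => x.
have [xy | xNy] := boolP (x \in fiber y); last by rewrite (out_perm a_on xNy).
by move: xy (xy); rewrite -{1}(perm_closed _ a_on) !inE => /eqP -> /eqP ->.
Qed.

Lemma preimsetD_fiber (D : {set Y}) y :
  b @^-1: (D :\ y) = b @^-1: D :\: fiber y.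
Proof. by apply/setP => x; rewrite !inE. Qed.

Lemma card_fiber_preserving_Sym (D : {set Y}) :
  #|fiber_preserving :&: Sym (b @^-1: D)| = \prod_(y in D) #|fiber y|`!.
Proof.
elim: {D}_.+1 {-2}D (ltnSn #|D|) => // k IHk D.
have [-> _ | [y yD] leDk] := set_0Vmem D.
  rewrite big_set0 -(cards1 (1%g : {perm X})); apply: eq_card => s.
  rewrite in_setI [_ \in Sym _]inE in_set1 preimset0.
  apply/andP/eqP => [[_ s0] | ->]; first by rewrite (perm_on_id s0) ?cards0.
  by rewrite perm_on1 group1.
set G := fiber_preserving :&: _.
have sGN : G \subset 'N(fiber y | 'P)%g.
  apply/subsetP => s /setIP[/fiber_preservingP sb _].
  by apply/astabsP => x; rewrite !inE /= sb.
have sSG : Sym (fiber y) \subset G.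
  rewrite subsetI Sym_fiber_sub; apply/subsetP => a; rewrite !inE => /subset_trans.
  by apply; apply/subsetP => x; rewrite !inE => /eqP ->.
rewrite (card_group_ker_morphim (restr_perm_morphism (fiber y)) sGN) /=.
rewrite ker_restr_perm -setIA Sym_astab -preimsetD_fiber restr_perm_Sym //.
rewrite card_Sym IHk; last by move: leDk; rewrite (cardsD1 y) yD.
by rewrite (bigD1 y yD) mulnC; congr (_ * _); apply: eq_bigl => z; rewrite !inE andbC.
Qed.

Lemma card_fiber_preserving : #|fiber_preserving| = \prod_y #|fiber y|`!.
Proof.
have -> : fiber_preserving = fiber_preserving :&: Sym (b @^-1: setT).
  apply/esym/setIidPl/subsetP => s _; rewrite inE preimsetT.
  by apply/subsetP => x; rewrite inE.
by rewrite card_fiber_preserving_Sym; apply: eq_bigl => y; rewrite inE.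
Qed.

Definition block_preserving : {set {perm X}} :=
  [set s : {perm X} | [forall x, forall x', (b (s x) == b (s x')) == (b x == b x')]].

Lemma block_preservingP s :
  reflect (forall x x', (b (s x) == b (s x')) = (b x == b x'))
          (s \in block_preserving).
Proof.
rewrite inE; apply: (iffP forallP) => [sb x x' | sb x].
  by have /forallP/(_ x')/eqP := sb x.
by apply/forallP => x'; rewrite sb.
Qed.

Lemma block_preserving_group_set : group_set block_preserving.
Proof.
apply/group_setP; split=> [|s u /block_preservingP sb /block_preservingP ub].
  by apply/block_preservingP => x x'; rewrite !perm1.
by apply/block_preservingP => x x'; rewrite !permM ub sb.
Qed.

Canonical block_preserving_group := Group block_preserving_group_set.

Lemma block_preserving_imset_fiber s x :
  s \in block_preserving -> s @: fiber (b x) = fiber (b (s x)).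
Proof.
move=> /block_preservingP sb; apply/setP => y.
by rewrite -[y](permKV s) (mem_imset _ _ (@perm_inj _ s)) !inE sb.
Qed.

Lemma lift_fiber_perm (g : {perm Y}) :
    (forall y, #|fiber (g y)| = #|fiber y|) ->
  exists s : {perm X}, forall x, b (s x) = g (b x).
Proof.
move=> card_g; pose e y := enum (fiber y).
have e_b x : x \in e (b x) by rewrite mem_enum inE.
pose s0 x := nth x (e (g (b x))) (index x (e (b x))).
have lt_index x : index x (e (b x)) < size (e (g (b x))).
  by rewrite -cardE card_g cardE index_mem.
have b_s0 x : b (s0 x) = g (b x).
  by have := mem_nth x (lt_index x); rewrite mem_enum inE => /eqP.
have index_s0 x : index (s0 x) (e (g (b x))) = index x (e (b x)).
  by rewrite index_uniq ?enum_uniq.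
have s0_inj : injective s0.
  move=> x x' eq_s0; have eq_b : b x = b x'.
    by apply: (@perm_inj _ g); rewrite -!b_s0 eq_s0.
  have x'_e : x' \in e (b x) by rewrite eq_b.
  apply: (index_inj x (e_b x) x'_e).
  by rewrite -index_s0 eq_s0 eq_b index_s0.
by exists (perm s0_inj) => x; rewrite permE.
Qed.

Definition contains_fiber A : bool :=
  [exists x in A, fiber (b x) \subset A].

Lemma contains_fiber_imset s A :
  s \in block_preserving -> contains_fiber (s @: A) = contains_fiber A.
Proof.
move=> /block_preservingP sb; apply/existsP/existsP.
  case=> _ /andP[/imsetP[x xA ->] sub_sA]; exists x; rewrite xA /=.
  apply/subsetP => y; rewrite inE => /eqP bxy.
  by rewrite -(mem_imset _ _ (@perm_inj _ s)) (subsetP sub_sA) // inE sb bxy.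
case=> x /andP[xA sub_A]; exists (s x); rewrite imset_f //=.
apply/subsetP => y; rewrite inE => /eqP bxy; rewrite -[y](permKV s) imset_f //.
by rewrite (subsetP sub_A) // inE -sb permKV bxy.
Qed.

Lemma contains_fiber_invariantV s :
    (forall A, contains_fiber (s @: A) = contains_fiber A) ->
  forall A, contains_fiber ((s^-1)%g @: A) = contains_fiber A.
Proof. by move=> inv A; rewrite -inv imset_permKV. Qed.

(* A fiber is a minimal set containing a fiber, and both [s] and [s^-1]
   preserve the sets containing a fiber. *)
Lemma contains_fiber_invariant_fiberwise s :
    (forall A, contains_fiber (s @: A) = contains_fiber A) ->
  forall x x', b x = b x' -> b (s x) = b (s x').
Proof.
move=> inv x x' bxx'; have invV := contains_fiber_invariantV inv.
have cf_fiber y : contains_fiber (fiber (b y)).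
  by apply/existsP; exists y; rewrite inE eqxx subxx.
have /existsP[_ /andP[/imsetP[w _ ->] sub_sB]] : contains_fiber (s @: fiber (b x)).
  by rewrite inv.
have /existsP[_ /andP[/imsetP[c cC ->] sub_C]] :
    contains_fiber ((s^-1)%g @: fiber (b (s w))) by rewrite invV.
have /imsetP[v vB def_c] := subsetP sub_sB c cC.
have in_C y : b y = b x -> b (s y) = b (s w).
  move=> bxy; have : y \in fiber (b ((s^-1)%g c)).
    by rewrite def_c permK inE bxy; rewrite inE eq_sym in vB.
  by case/(subsetP sub_C)/imsetP => c' + ->; rewrite permKV inE => /eqP.
by rewrite !in_C.
Qed.

Lemma contains_fiber_invariantP s :
  reflect (forall A, contains_fiber (s @: A) = contains_fiber A)
          (s \in block_preserving).
Proof.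
apply: (iffP idP) => [sb A | inv]; first exact: contains_fiber_imset.
apply/block_preservingP => x x'; apply/eqP/eqP.
  move/(contains_fiber_invariant_fiberwise (contains_fiber_invariantV inv)).
  by rewrite !permK.
exact: contains_fiber_invariant_fiberwise.
Qed.

Section BlockPerm.

Variable r : Y -> X.
Hypothesis br : cancel r b.

Definition block_perm_fun s y : Y :=
  if s \in block_preserving then b (s (r y)) else y.

Lemma block_perm_fun_inj s : injective (block_perm_fun s).
Proof.
move=> y y'; rewrite /block_perm_fun; case: ifP => [/block_preservingP sb /eqP | //].
by rewrite sb !br => /eqP.
Qed.

Definition block_perm s : {perm Y} := perm (@block_perm_fun_inj s).

Lemma block_permE s x : s \in block_preserving -> block_perm s (b x) = b (s x).
Proof.
move=> sP; rewrite permE /block_perm_fun sP; apply/eqP.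
by rewrite (block_preservingP _ sP) br.
Qed.

Lemma block_permM : {in block_preserving &, {morph block_perm : s u / (s * u)%g}}.
Proof.
move=> s u sP uP; have suP : (s * u)%g \in block_preserving by rewrite groupM.
apply/permP => y; rewrite -(br y) permM !block_permE //.
by rewrite permM.
Qed.

Canonical block_perm_morphism := Morphism block_permM.

Lemma block_preserving_ker :
  block_preserving :&: ('ker block_perm)%g = fiber_preserving.
Proof.
apply/setP => s; rewrite in_setI; apply/andP/idP => [[sP /kerP ker_s] | sF].
  apply/fiber_preservingP => x; rewrite -block_permE //.
  by rewrite (ker_s sP) perm1.
have sP : s \in block_preserving.
  by move/fiber_preservingP: sF => sb; apply/block_preservingP => x x'; rewrite !sb.
split=> //; apply/kerP => //; apply/permP => y.
by rewrite -(br y) block_permE // perm1; apply/fiber_preservingP.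
Qed.

Lemma im_block_perm :
  (block_perm @* block_preserving)%g =
    [set g : {perm Y} | [forall y, #|fiber (g y)| == #|fiber y|]].
Proof.
apply/setP => g; apply/morphimP/idP => [[s _ sP ->] | ].
  rewrite inE; apply/forallP => y; apply/eqP.
  rewrite -(br y) block_permE // -block_preserving_imset_fiber //.
  exact/card_imset/perm_inj.
rewrite inE => /forallP card_g.
have [s sb] := lift_fiber_perm (fun y => eqP (card_g y)).
have sP : s \in block_preserving.
  by apply/block_preservingP => x x'; rewrite !sb (inj_eq (@perm_inj _ g)).
by exists s => //; apply/permP => y; rewrite -(br y) block_permE.
Qed.

Lemma card_block_preserving :
  #|block_preserving| =
    #|fiber_preserving| *
    #|[set g : {perm Y} | [forall y, #|fiber (g y)| == #|fiber y|]]|.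
Proof.
rewrite (card_group_ker_morphim block_perm_morphism (subxx _)).
by rewrite block_preserving_ker im_block_perm.
Qed.

End BlockPerm.

End Fibers.

Lemma card_fiber_preserving_nat (T : finType) (c : T -> nat) m :
    (forall x, c x < m) ->
  #|[set s : {perm T} | [forall x, c (s x) == c x]]| =
    \prod_(u < m) #|[set x | c x == u]|`!.
Proof.
(* equality of ordinals is equality of their values, so this is an instance *)
by move=> ltcm; apply: (card_fiber_preserving (fun x => Ordinal (ltcm x))).
Qed.

Section Complex.

Variables (n t : nat) (f : 'I_n.+1 -> 'I_t).

Definition block_index (v : vert n t) : 'I_t :=
  match v with inl i => f i | inr j => j end.

Lemma card_fiber_block_index j : #|fiber block_index j| = (part_size f j).+1.
Proof.
have -> : fiber block_index j = inr j |: inl @: [set i | f i == j].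
  apply/setP => -[i | k]; rewrite !inE /=.
    by rewrite (mem_imset _ _ (@inl_inj _ _)) inE.
  by rewrite orbC; case: imsetP => // -[].
by rewrite cardsU1 card_imset; [case: imsetP => // -[] | exact: inl_inj].
Qed.

Lemma facet_avoids_block B j :
  is_facet f B -> exists2 v, block_index v = j & v \notin B.
Proof.
case/existsP => c /andP[_ /eqP ->].
have [jB | jNB] := boolP (inr j \in yset f c); last by exists (inr j).
case/imsetP: jB => i _; rewrite /ychoice; case ci: (c i) => // -[fij].
exists (inl i) => /=; first by rewrite fij.
apply/imsetP => -[k _]; rewrite /ychoice.
by case ck: (c k) => // -[eik]; rewrite eik ck in ci.
Qed.

Lemma transversal_compl_sub_facet (m : 'I_t -> vert n t) :
    (forall j, block_index (m j) = j) ->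
  exists2 B, is_facet f B & ~: [set m j | j : 'I_t] \subset B.
Proof.
(* y_i = p_(f i) exactly when m (f i) = i, so the facet misses precisely the m j *)
move=> bm; pose c := [ffun i => m (f i) == inl i].
exists (yset f c).
  apply/existsP; exists c; rewrite eqxx andbT; apply/injectiveP => i k.
  rewrite /ychoice !ffunE; case: ifP => ci; case: ifP => ck // -[] // fik.
  by move/eqP: ck; rewrite -fik (eqP ci) => -[].
apply/subsetP => v; rewrite inE; case: v => [i | j] vNm; apply/imsetP.
  exists i => //; rewrite /ychoice ffunE; case: eqP => // mi.
  by case/imsetP: vNm; exists (f i).
case mj: (m j) (bm j) => [i | j'] /= bmj; last first.
  by case/imsetP: vNm; exists j; rewrite // mj bmj.
by exists i => //; rewrite /ychoice ffunE bmj mj eqxx.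
Qed.

Lemma is_faceE A :
  is_face f A = (A != set0) && ~~ contains_fiber block_index A.
Proof.
rewrite /is_face; congr andb; apply/existsP/negP => [[B /andP[facetB sAB]] | nfA].
  case/existsP => x /andP[xA sub_x].
  have [v bv vB] := facet_avoids_block (block_index x) facetB.
  move/negP: vB; apply; apply: (subsetP sAB); apply: (subsetP sub_x).
  by rewrite inE bv.
have /fin_all_exists2[m bm mA] :
    forall j, exists2 v : vert n t, block_index v = j & v \notin A.
  move=> j.
  have [jA | jNA] := boolP (inr j \in A); last by exists (inr j).
  have /subsetPn[v vj vNA] : ~~ (fiber block_index j \subset A).
    by apply/negP => sub; apply: nfA; apply/existsP; exists (inr j); rewrite jA.
  by exists v => //; rewrite inE in vj; apply/eqP.
have [B facetB subB] := transversal_compl_sub_facet bm.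
exists B; rewrite facetB; apply: subset_trans subB; apply/subsetP => v vA.
by rewrite inE; apply/imsetP => -[j _ vm]; move: (mA j); rewrite -vm vA.
Qed.

Lemma mult0 : (forall j, exists i, f i = j) -> mult f 0 = 0.
Proof.
move=> f_surj; apply/eqP; rewrite cards_eq0; apply/eqP/setP => j; rewrite !inE.
have [i <-] := f_surj j.
by apply/negbTE; rewrite -lt0n; apply/card_gt0P; exists i; rewrite inE.
Qed.

Lemma AutK_block_preserving : AutK f = block_preserving block_index.
Proof.
apply/setP => s; rewrite [s \in AutK f]inE /is_aut.
apply/forallP/contains_fiber_invariantP => [aut A | inv A].
  have [-> | nzA] := eqVneq A set0; first by rewrite imset0.
  by have /eqP := aut A; rewrite !is_faceE imset_eq0 nzA => /negb_inj.
by rewrite !is_faceE imset_eq0 inv.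
Qed.

End Complex.

Theorem proposition2p7 (n t : nat) (f : 'I_n.+1 -> 'I_t) :
  2 <= n ->
  (forall j : 'I_t, exists i : 'I_n.+1, f i = j) ->
  #|AutK f| =
    (\prod_(j < t) (part_size f j).+1`!) *
    \prod_(1 <= u < n.+2) (mult f u)`!.
Proof.
move=> _ f_surj.
rewrite AutK_block_preserving (@card_block_preserving _ _ _ inr) //.
rewrite card_fiber_preserving; congr (_ * _).
  by apply: eq_bigr => j _; rewrite card_fiber_block_index.
rewrite (eq_card (B := [set g : {perm 'I_t} |
                         [forall j, part_size f (g j) == part_size f j]])) => [|g].
  rewrite (@card_fiber_preserving_nat _ _ n.+2) => [|j].
    rewrite -(big_mkord xpredT (fun u => (mult f u)`!)) big_ltn //.
    by rewrite mult0 // mul1n.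
  by rewrite ltnS -[X in _ <= X](card_ord n.+1) max_card.
by rewrite !inE; apply: eq_forallb => j; rewrite !card_fiber_block_index.
Qed.
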